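(* Let $E$ be a contact Riemannian Lie algebroid with associated almost contact Riemannian structure $(F_E,\xi,\eta,g_E)$. Then $\mathcal{L}_\xi\eta=0$, $\mathcal{L}_\xi(d_E\eta)=0$, and $(\mathcal{L}_{F_E(s_1)}\eta)(s_2)=(\mathcal{L}_{F_E(s_2)}\eta)(s_1)$ for all $s_1,s_2\in\Gamma(E)$.
   Context: A Lie algebroid $(E,\rho_E,[\cdot,\cdot]_E)$ over $M$ is a vector bundle with anchor $\rho_E:E\to TM$ and Lie bracket on $\Gamma(E)$ with $[s_1,fs_2]_E=f[s_1,s_2]_E+\rho_E(s_1)(f)s_2$. For a 1-form $\eta$, $(d_E\eta)(s_1,s_2)=\frac12\{\rho_E(s_1)(\eta(s_2))-\rho_E(s_2)(\eta(s_1))-\eta([s_1,s_2]_E)\}$. For $E$ of rank $2m+1$, an almost contact Riemannian structure $(F_E,\xi,\eta,g_E)$: endomorphism $F_E$, $\xi\in\Gamma(E)$, $\eta\in\Gamma(E^* )$, bundle metric $g_E$ with $F_E^2=-I_E+\eta\otimes\xi$, $\eta(\xi)=1$, $g_E(F_Es_1,F_Es_2)=g_E(s_1,s_2)-\eta(s_1)\eta(s_2)$; fundamental form $\Omega_E(s_1,s_2)=g_E(s_1,F_Es_2)$. $E$ is contact Riemannian if also $\eta\wedge(d_E\eta)^m$ vanishes nowhere and $d_E\eta=\Omega_E$. Lie derivatives: $(\mathcal{L}_s\eta)(s')=\rho_E(s)(\eta(s'))-\eta([s,s']_E)$; for a 2-form $\omega$, $(\mathcal{L}_s\omega)(s_1,s_2)=\rho_E(s)(\omega(s_1,s_2))-\omega([s,s_1]_E,s_2)-\omega(s_1,[s,s_2]_E)$.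 *)

From mathcomp Require Import all_boot all_order all_algebra all_fingroup.
Set Implicit Arguments. Unset Strict Implicit. Unset Printing Implicit Defensive.
Import Order.TTheory GRing.Theory Num.Theory.
Local Open Scope ring_scope.

(* Model of a rank-n vector bundle E over a base M:
   - the fibre E_x is identified with 'rV[R]_n (pointwise identification);
   - Cinf : the algebra of smooth functions on M (a predicate on M -> R);
   - Gam  : the smooth sections Gamma(E) (a predicate on M -> 'rV_n).
   Bundle maps / tensors are given pointwise:
   - endomorphism F_E : M -> 'M_n, acting on rows  u |-> u *m F x;
   - section xi : M -> 'rV_n;
   - 1-form eta : M -> 'cV_n, acting by u |-> (u *m eta x) 0 0;
   - bundle metric g : M -> 'M_n,  g_x(u,v) = (u *m g x *m v^T) 0 0. *)

Section Defs.
Variables (R : realFieldType) (M : Type) (n : nat).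

Definition fsec := M -> 'rV[R]_n.

Definition function_algebra (Cinf : (M -> R) -> Prop) : Prop :=
  [/\ forall a : R, Cinf (fun _ => a),
      forall f h, Cinf f -> Cinf h -> Cinf (fun x => f x + h x),
      forall f, Cinf f -> Cinf (fun x => - f x) &
      forall f h, Cinf f -> Cinf h -> Cinf (fun x => f x * h x)].

Definition section_module (Cinf : (M -> R) -> Prop) (Gam : fsec -> Prop) : Prop :=
  [/\ Gam (fun _ => 0),
      forall s t, Gam s -> Gam t -> Gam (fun x => s x + t x) &
      forall f s, Cinf f -> Gam s -> Gam (fun x => f x *: s x)].

Record lie_algebroid (Cinf : (M -> R) -> Prop) (Gam : fsec -> Prop)
  (rho : fsec -> (M -> R) -> (M -> R)) (br : fsec -> fsec -> fsec) : Prop := {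
  la_fun : function_algebra Cinf;
  la_sec : section_module Cinf Gam;
  (* rho(s) is a vector field, i.e. an R-linear derivation of Cinf *)
  la_ax1 : forall s f, Gam s -> Cinf f -> Cinf (rho s f);
  la_ax2 : forall s f h, Gam s -> Cinf f -> Cinf h ->
     rho s (fun x => f x + h x) = (fun x => rho s f x + rho s h x);
  la_ax3 : forall s (a : R) f, Gam s -> Cinf f ->
     rho s (fun x => a * f x) = (fun x => a * rho s f x);
  la_ax4 : forall s f h, Gam s -> Cinf f -> Cinf h ->
     rho s (fun x => f x * h x) = (fun x => f x * rho s h x + h x * rho s f x);
  (* rho is a bundle map, i.e. Cinf-linear in the section *)
  la_ax5 : forall s t f, Gam s -> Gam t -> Cinf f ->
     rho (fun x => s x + t x) f = (fun x => rho s f x + rho t f x);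
  la_ax6 : forall h s f, Cinf h -> Gam s -> Cinf f ->
     rho (fun x => h x *: s x) f = (fun x => h x * rho s f x);
  la_ax7 : forall s t, Gam s -> Gam t -> Gam (br s t);
  la_ax8 : forall s t u, Gam s -> Gam t -> Gam u ->
     br s (fun x => t x + u x) = (fun x => br s t x + br s u x);
  la_ax9 : forall s (a : R) t, Gam s -> Gam t ->
     br s (fun x => a *: t x) = (fun x => a *: br s t x);
  la_ax10 : forall s t, Gam s -> Gam t -> br s t = (fun x => - br t s x);
  la_ax11 : forall s t u, Gam s -> Gam t -> Gam u ->
     (fun x => br s (br t u) x + br t (br u s) x + br u (br s t) x) = (fun _ => 0);
  la_ax12 : forall s f t, Gam s -> Cinf f -> Gam t ->
     br s (fun x => f x *: t x) = (fun x => f x *: br s t x + rho s f x *: t x);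
  la_ax13 : forall s t f, Gam s -> Gam t -> Cinf f ->
     rho (br s t) f = (fun x => rho s (rho t f) x - rho t (rho s f) x)
}.

Definition etaS (eta : M -> 'cV[R]_n) (s : fsec) : M -> R :=
  fun x => (s x *m eta x) 0 0.
Definition FS (F : M -> 'M[R]_n) (s : fsec) : fsec := fun x => s x *m F x.
Definition gS (g : M -> 'M[R]_n) (s t : fsec) : M -> R :=
  fun x => (s x *m g x *m (t x)^T) 0 0.
Definition OmegaS (g F : M -> 'M[R]_n) (s1 s2 : fsec) : M -> R :=
  gS g s1 (FS F s2).

(* exterior derivative of a 1-form (with the paper's 1/2 convention) *)
Definition dE (rho : fsec -> (M -> R) -> (M -> R)) (br : fsec -> fsec -> fsec)
  (eta : fsec -> M -> R) (s1 s2 : fsec) : M -> R :=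
  fun x => 2^-1 * (rho s1 (eta s2) x - rho s2 (eta s1) x - eta (br s1 s2) x).

Definition Lie1 (rho : fsec -> (M -> R) -> (M -> R)) (br : fsec -> fsec -> fsec)
  (s : fsec) (eta : fsec -> M -> R) (s' : fsec) : M -> R :=
  fun x => rho s (eta s') x - eta (br s s') x.
Definition Lie2 (rho : fsec -> (M -> R) -> (M -> R)) (br : fsec -> fsec -> fsec)
  (s : fsec) (om : fsec -> fsec -> M -> R) (s1 s2 : fsec) : M -> R :=
  fun x => rho s (om s1 s2) x - om (br s s1) s2 x - om s1 (br s s2) x.

Record almost_contact_riemannian (Cinf : (M -> R) -> Prop) (Gam : fsec -> Prop)
  (F : M -> 'M[R]_n) (xi : fsec) (eta : M -> 'cV[R]_n) (g : M -> 'M[R]_n) : Prop := {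
  acr_xi : Gam xi;
  acr_F : forall s, Gam s -> Gam (FS F s);
  acr_eta : forall s, Gam s -> Cinf (etaS eta s);
  acr_g : forall s t, Gam s -> Gam t -> Cinf (gS g s t);
  acr_F2 : forall x, F x *m F x = - 1%:M + eta x *m xi x;
  acr_etaxi : forall x, (xi x *m eta x) 0 0 = 1;
  acr_gsym : forall x, (g x)^T = g x;
  acr_gpos : forall x (u : 'rV[R]_n), u != 0 -> 0 < (u *m g x *m u^T) 0 0;
  acr_gF : forall x, F x *m g x *m (F x)^T = g x - eta x *m (eta x)^T
}.

End Defs.

(* value of the top form  eta /\ omega^m  on vectors v_0..v_2m of a fibre
   'rV_(2m+1) (up to a positive normalising constant, irrelevant for
   non-vanishing) *)
Definition wedge_top (R : realFieldType) (m : nat) (e : 'cV[R]_(m.*2.+1))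
  (om : 'rV[R]_(m.*2.+1) -> 'rV[R]_(m.*2.+1) -> R)
  (v : 'I_(m.*2.+1) -> 'rV[R]_(m.*2.+1)) : R :=
  \sum_(sg : 'S_(m.*2.+1))
     (-1) ^+ sg * (v (sg ord0) *m e) 0 0 *
     \prod_(k < m) om (v (sg (inord k.*2.+1))) (v (sg (inord k.*2.+2))).

Definition contact_riemannian (R : realFieldType) (M : Type) (m : nat)
  (Cinf : (M -> R) -> Prop) (Gam : fsec R M m.*2.+1 -> Prop)
  (rho : fsec R M m.*2.+1 -> (M -> R) -> (M -> R))
  (br : fsec R M m.*2.+1 -> fsec R M m.*2.+1 -> fsec R M m.*2.+1)
  (F : M -> 'M[R]_(m.*2.+1)) (xi : fsec R M m.*2.+1)
  (eta : M -> 'cV[R]_(m.*2.+1)) (g : M -> 'M[R]_(m.*2.+1)) : Prop :=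
  [/\ lie_algebroid Cinf Gam rho br,
      almost_contact_riemannian Cinf Gam F xi eta g,
      (* eta /\ (d_E eta)^m vanishes nowhere; pointwise d_E eta = Omega_E *)
      forall x, exists v, wedge_top (eta x)
                  (fun u w => (u *m g x *m (w *m F x)^T) 0 0) v != 0 &
      forall s1 s2, Gam s1 -> Gam s2 ->
        dE rho br (etaS eta) s1 s2 = OmegaS g F s1 s2].

(* Since [eta xi = 1] and [eta (F s) = 0] are constant, [d_E eta (s1, s2)] is half of
   [(L_s1 eta) s2] whenever [s1] is [xi] or some [F s].  The pointwise identities
   [xi F = 0], [F eta = 0] and [g(xi, .) = eta] give [Omega_E(xi, .) = 0], while
   [Omega_E(F s1, s2) = g(F s1, F s2)] is symmetric; with [d_E eta = Omega_E] this yields the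
   first and third identities.  The second holds because [L_xi] commutes with [d_E], which
   only uses that the anchor preserves brackets and the Jacobi identity. *)

From mathcomp Require Import all_boot all_order all_algebra all_fingroup.
From mathcomp Require Import lra.
From Stdlib Require Import FunctionalExtensionality.
Set Implicit Arguments. Unset Strict Implicit. Unset Printing Implicit Defensive.
Import Order.TTheory GRing.Theory Num.Theory.
Local Open Scope ring_scope.

Section LieAlgebroid.
Variables (R : realFieldType) (M : Type) (n : nat)
  (Cinf : (M -> R) -> Prop) (Gam : fsec R M n -> Prop)
  (rho : fsec R M n -> (M -> R) -> (M -> R))
  (br : fsec R M n -> fsec R M n -> fsec R M n).
Hypothesis LA : lie_algebroid Cinf Gam rho br.

Lemma Cinf_cst a : Cinf (fun _ => a).
Proof. by have [] := la_fun LA. Qed.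

Lemma Cinf_sub f h : Cinf f -> Cinf h -> Cinf (fun x => f x - h x).
Proof. by have [_ CD CN _] := la_fun LA => Cf Ch; apply: CD (CN _ Ch). Qed.

Lemma rho_cst s a : Gam s -> rho s (fun _ => a) = fun _ => 0.
Proof.
move=> Gs; have rho1 : rho s (fun _ => 1) = fun _ => 0.
  apply: functional_extensionality => x.
  have := congr1 (@^~ x) (la_ax4 LA Gs (Cinf_cst 1) (Cinf_cst 1)) => /=.
  rewrite mulr1; lra.
apply: functional_extensionality => x.
have := congr1 (@^~ x) (la_ax3 LA a Gs (Cinf_cst 1)) => /=.
by rewrite mulr1 rho1 mulr0.
Qed.

Lemma rho_sub s f h : Gam s -> Cinf f -> Cinf h ->
  rho s (fun x => f x - h x) = fun x => rho s f x - rho s h x.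
Proof.
move=> Gs Cf Ch; have [_ _ CN _] := la_fun LA.
rewrite (la_ax2 LA Gs Cf (CN _ Ch)).
have -> : (fun x => - h x) = (fun x => -1 * h x).
  by apply: functional_extensionality => x; rewrite mulN1r.
by rewrite (la_ax3 LA) //; apply: functional_extensionality => x; rewrite mulN1r.
Qed.

Lemma br_jacobi s t u : Gam s -> Gam t -> Gam u ->
  br s (br t u) = fun x => br (br s t) u x + br t (br s u) x.
Proof.
move=> Gs Gt Gu; apply: functional_extensionality => x.
have Gsu := la_ax7 LA Gs Gu.
have brN : br t (fun y => - br s u y) = fun y => - br t (br s u) y.
  have -> : (fun y => - br s u y) = (fun y => -1 *: br s u y).
    by apply: functional_extensionality => y; rewrite scaleN1r.
  rewrite (la_ax9 LA) //.
  by apply: functional_extensionality => y; rewrite scaleN1r.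
have := congr1 (@^~ x) (la_ax11 LA Gs Gt Gu) => /=.
rewrite (la_ax10 LA Gu (la_ax7 LA Gs Gt)) (la_ax10 LA Gu Gs) brN.
by move/eqP; rewrite -addrA -opprD subr_eq0 => /eqP ->; rewrite addrC.
Qed.

Section OneForm.
Variable (eta : M -> 'cV[R]_n).
Hypothesis Ceta : forall s, Gam s -> Cinf (etaS eta s).

Lemma rho_dE t s1 s2 : Gam t -> Gam s1 -> Gam s2 ->
  rho t (dE rho br (etaS eta) s1 s2) =
  fun x => 2^-1 * (rho t (rho s1 (etaS eta s2)) x - rho t (rho s2 (etaS eta s1)) x
                   - rho t (etaS eta (br s1 s2)) x).
Proof.
move=> Gt G1 G2.
have C12 := la_ax1 LA G1 (Ceta G2); have C21 := la_ax1 LA G2 (Ceta G1).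
have Cb := Ceta (la_ax7 LA G1 G2).
have C3 := Cinf_sub C12 C21.
by rewrite /dE (la_ax3 LA) ?rho_sub //; try assumption; apply: Cinf_sub.
Qed.

Lemma Lie1_dE_cst s1 s2 c : Gam s2 -> etaS eta s1 = (fun _ => c) ->
  Lie1 rho br s1 (etaS eta) s2 = fun x => 2 * dE rho br (etaS eta) s1 s2 x.
Proof.
move=> G2 E1; apply: functional_extensionality => x.
by rewrite /Lie1 /dE E1 rho_cst // subr0 mulrA divff ?mul1r // pnatr_eq0.
Qed.

Lemma Lie2_dE s1 s2 xi : Gam xi -> Gam s1 -> Gam s2 ->
  Lie2 rho br xi (dE rho br (etaS eta)) s1 s2 =
  dE rho br (Lie1 rho br xi (etaS eta)) s1 s2.
Proof.
move=> Gxi G1 G2; have G12 := la_ax7 LA G1 G2.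
have Gx1 := la_ax7 LA Gxi G1; have Gx2 := la_ax7 LA Gxi G2.
apply: functional_extensionality => x; rewrite /Lie2 /dE /Lie1 rho_dE //.
have Crho s t : Gam s -> Gam t -> Cinf (rho s (etaS eta t)).
  by move=> Gs Gt; apply: (la_ax1 LA Gs (Ceta Gt)).
rewrite !rho_sub //; try by [apply: Crho | apply: Ceta].
have anchor s f : Gam s -> Cinf f -> rho xi (rho s f) x = rho s (rho xi f) x + rho (br xi s) f x.
  move=> Gs Cf; have := congr1 (@^~ x) (la_ax13 LA Gxi Gs Cf) => /=; lra.
have jacobi : etaS eta (br xi (br s1 s2)) x =
              etaS eta (br (br xi s1) s2) x + etaS eta (br s1 (br xi s2)) x.
  by rewrite /etaS (br_jacobi Gxi G1 G2) mulmxDl mxE.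
rewrite !anchor ?jacobi //; try by [apply: Crho | apply: Ceta].
lra.
Qed.

End OneForm.
End LieAlgebroid.

Section AlmostContactAlgebra.
Variables (R : realFieldType) (n : nat) (F g : 'M[R]_n) (xi : 'rV[R]_n) (eta : 'cV[R]_n).
Hypotheses (F2 : F *m F = - 1%:M + eta *m xi) (eta_xi : (xi *m eta) 0 0 = 1)
  (gF : F *m g *m F^T = g - eta *m eta^T).

Lemma mulmx_xi_eta : xi *m eta = 1%:M.
Proof. by rewrite [LHS]mx11_scalar eta_xi. Qed.

Lemma mulmx_F_eta_xi : F *m (eta *m xi) = eta *m xi *m F.
Proof.
have : F *m (F *m F) = F *m F *m F by rewrite mulmxA.
rewrite F2 mulmxDr mulmxDl mulmxN mulNmx mulmx1 mul1mx.
by move/addrI.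
Qed.

Lemma mulmx_xi_F : xi *m F = 0.
Proof.
(* [xi F = c xi] with [c = xi F eta], and [xi F^2 = 0] then forces [c^2 = 0]. *)
pose c := (xi *m F *m eta) 0 0.
have xiF : xi *m F = c *: xi.
  have := congr1 (mulmx xi) mulmx_F_eta_xi.
  rewrite !mulmxA mulmx_xi_eta mul1mx => <-.
  by rewrite [xi *m F *m eta]mx11_scalar mul_scalar_mx.
have xiF2 : xi *m F *m F = 0.
  by rewrite -mulmxA F2 mulmxDr mulmxN mulmx1 mulmxA mulmx_xi_eta mul1mx addNr.
rewrite xiF -scalemxAl xiF scalerA in xiF2.
have /matrixP/(_ 0 0) : (c * c) *: (xi *m eta) = 0 by rewrite scalemxAl xiF2 mul0mx.
rewrite mulmx_xi_eta !mxE eqxx mulr1 => /eqP; rewrite mulf_eq0 orbb => /eqP c0.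
by rewrite xiF c0 scale0r.
Qed.

Lemma mulmx_F_eta : F *m eta = 0.
Proof.
have := congr1 (mulmx^~ eta) mulmx_F_eta_xi.
by rewrite -!mulmxA mulmx_xi_eta mulmx1 [xi *m (F *m eta)]mulmxA mulmx_xi_F mul0mx mulmx0.
Qed.

Lemma trmx_eta : eta^T = xi *m g.
Proof.
have := congr1 (mulmx xi) gF.
rewrite !mulmxA mulmx_xi_F !mul0mx mulmxBr mulmxA mulmx_xi_eta mul1mx.
by move/eqP; rewrite eq_sym subr_eq0 => /eqP.
Qed.

End AlmostContactAlgebra.

Section AlmostContact.
Variables (R : realFieldType) (M : Type) (n : nat)
  (Cinf : (M -> R) -> Prop) (Gam : fsec R M n -> Prop)
  (F : M -> 'M[R]_n) (xi : fsec R M n) (eta : M -> 'cV[R]_n) (g : M -> 'M[R]_n).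
Hypothesis AC : almost_contact_riemannian Cinf Gam F xi eta g.

Lemma etaS_xi : etaS eta xi = fun _ => 1.
Proof. by apply: functional_extensionality => x; rewrite /etaS (acr_etaxi AC). Qed.

Lemma etaS_FS s : etaS eta (FS F s) = fun _ => 0.
Proof.
apply: functional_extensionality => x.
by rewrite /etaS /FS -mulmxA (mulmx_F_eta (acr_F2 AC x) (acr_etaxi AC x)) mulmx0 mxE.
Qed.

Lemma gS_xi s : gS g xi s = etaS eta s.
Proof.
apply: functional_extensionality => x.
rewrite /gS /etaS -(trmx_eta (acr_F2 AC x) (acr_etaxi AC x) (acr_gF AC x)).
by rewrite -trmx_mul mxE.
Qed.

Lemma gS_sym s t : gS g s t = gS g t s.
Proof.
apply: functional_extensionality => x.
have tr11 (A : 'M[R]_1) : A 0 0 = A^T 0 0 by rewrite mxE.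
by rewrite /gS tr11 !trmx_mul trmxK (acr_gsym AC) mulmxA.
Qed.

Lemma OmegaS_xi s : OmegaS g F xi s = fun _ => 0.
Proof. by rewrite /OmegaS gS_xi etaS_FS. Qed.

Lemma OmegaS_FS_sym s t : OmegaS g F (FS F s) t = OmegaS g F (FS F t) s.
Proof. by rewrite /OmegaS gS_sym. Qed.

End AlmostContact.

Theorem proposition4p3 (R : realFieldType) (M : Type) (m : nat)
  (Cinf : (M -> R) -> Prop) (Gam : fsec R M m.*2.+1 -> Prop)
  (rho : fsec R M m.*2.+1 -> (M -> R) -> (M -> R))
  (br : fsec R M m.*2.+1 -> fsec R M m.*2.+1 -> fsec R M m.*2.+1)
  (F : M -> 'M[R]_(m.*2.+1)) (xi : fsec R M m.*2.+1)
  (eta : M -> 'cV[R]_(m.*2.+1)) (g : M -> 'M[R]_(m.*2.+1)) :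
  contact_riemannian Cinf Gam rho br F xi eta g ->
  [/\ forall s, Gam s -> Lie1 rho br xi (etaS eta) s = (fun _ => 0),
      forall s1 s2, Gam s1 -> Gam s2 ->
        Lie2 rho br xi (dE rho br (etaS eta)) s1 s2 = (fun _ => 0) &
      forall s1 s2, Gam s1 -> Gam s2 ->
        Lie1 rho br (FS F s1) (etaS eta) s2 = Lie1 rho br (FS F s2) (etaS eta) s1].
Proof.
case=> LA AC _ dE_Omega.
have Ceta := acr_eta AC; have Gxi := acr_xi AC.
have Lie1_xi s : Gam s -> Lie1 rho br xi (etaS eta) s = fun _ => 0.
  move=> Gs; rewrite (Lie1_dE_cst LA Gs (etaS_xi AC)) dE_Omega // (OmegaS_xi AC).
  by apply: functional_extensionality => x; rewrite mulr0.
split=> // s1 s2 G1 G2.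
- apply: functional_extensionality => x.
  have G12 := la_ax7 LA G1 G2.
  rewrite (Lie2_dE LA Ceta) // /dE !Lie1_xi // (rho_cst LA _ G1) (rho_cst LA _ G2).
  by rewrite !subr0 mulr0.
- rewrite !(Lie1_dE_cst LA _ (etaS_FS AC _)) //.
  have GF1 := acr_F AC G1; have GF2 := acr_F AC G2.
  by rewrite !dE_Omega // (OmegaS_FS_sym AC s1 s2).
Qed.
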